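(* Let $C$ be an ordered field. The theory $T_{\mathrm{Ham}}$ of independent dense Hamel spaces over $C$ is not strongly dependent. Consequently it is not dp-minimal and does not have finite dp-rank.
   Context: Let $C$ be an ordered field. A $2$-ordered $C$-vector space is a $C$-vector space $G$ with two total orderings $<_0,<_1$ such that $G$ is an ordered $C$-vector space with respect to each of them. Put $G_\infty=G\cup\{\infty\}$, with $G<_0\infty$ and $G<_1\infty$. A Hamel valuation on $G$ is a map $v:G\to G_\infty$ such that for all $x,y\in G$ and $\lambda\in C^{\times}$: $v(x)=\infty$ iff $x=0$; $v(x+y)\ge_0\min_0(v(x),v(y))$; $v(\lambda x)=v(x)$; if $0<_1x<_1y$ then $v(x)\ge_0 v(y)$; $v(v(x))=v(x)$ (with $v(\infty)=\infty$); and $v(x)>_1 0$. A Hamel space over $C$ is such a pair $(G,v)$. It is independent if for all $a_0,b_0,a_1,b_1\in G\cup\{\pm\infty\}$ with $a_0<_0b_0$ and $a_1<_1b_1$ there is $z\in G$ with $a_0<_0z<_0b_0$ and $a_1<_1z<_1b_1$; it is dense if for all $a<_0b$ in $G$ there is $c\in G$ with $a<_0v(c)<_0b$. The language is $\mathcal{L}_{\mathrm{Ham}}=\{0,+,(\lambda_c)_{c\in C},<_0,<_1,v,\infty\}$, a Hamel space being viewed as a structure with universe $G_\infty$, where $\lambda_c$ is scalar multiplication by $c$, and $g+\infty=\infty+g=\infty+\infty=\lambda_c(\infty)=v(\infty)=\infty$. $T_{\mathrm{Ham}}$ is the $\mathcal{L}_{\mathrm{Ham}}$-theory whose models are exactly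 the independent dense Hamel spaces over $C$ (it is complete). Strongly dependent, dp-minimal and finite dp-rank are the standard notions for NIP theories. *)

From HB Require Import structures.
From mathcomp Require Import all_boot all_order all_algebra.
Set Implicit Arguments. Unset Strict Implicit. Unset Printing Implicit Defensive.
Import Order.TTheory GRing.Theory Num.Theory.
Local Open Scope ring_scope.

(* G_infty = option G, with None playing the role of infinity.        *)

Section Hamel.
Variable C : realFieldType.
Variable G : lmodType C.

Definition ltinf (lt : rel G) (a b : option G) : bool :=
  match a, b with
  | Some x, Some y => lt x y
  | Some _, None => true
  | None, _ => false
  end.

Definition leinf (lt : rel G) (a b : option G) : bool := ltinf lt a b || (a == b).

Definition mininf (lt : rel G) (a b : option G) : option G :=
  if ltinf lt a b then a else b.

Definition vinf (v : G -> option G) (a : option G) : option G :=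
  match a with Some x => v x | None => None end.

Definition ordered_vspace (lt : rel G) : Prop :=
  [/\ (forall x, ~~ lt x x),
      (forall x y z, lt x y -> lt y z -> lt x z),
      (forall x y, [|| lt x y, x == y | lt y x]),
      (forall x y z, lt x y -> lt (x + z) (y + z))
    & (forall (c : C) x y, 0 < c -> lt x y -> lt (c *: x) (c *: y))].

Definition two_ordered_vspace (lt0 lt1 : rel G) : Prop :=
  ordered_vspace lt0 /\ ordered_vspace lt1.

Definition hamel_valuation (lt0 lt1 : rel G) (v : G -> option G) : Prop :=
  (forall x, v x = None <-> x = 0) /\
  (forall x y, leinf lt0 (mininf lt0 (v x) (v y)) (v (x + y))) /\
  (forall (c : C) x, c != 0 -> v (c *: x) = v x) /\
  (forall x y, lt1 0 x -> lt1 x y -> leinf lt0 (v y) (v x)) /\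
  (forall x, vinf v (v x) = v x) /\
  (forall x, ltinf lt1 (Some 0) (v x)).

Definition hamel_space (lt0 lt1 : rel G) (v : G -> option G) : Prop :=
  two_ordered_vspace lt0 lt1 /\ hamel_valuation lt0 lt1 v.

Inductive ext := NInf | Fin of G | PInf.

Definition ltext (lt : rel G) (a b : ext) : bool :=
  match a, b with
  | NInf, NInf => false
  | NInf, _ => true
  | Fin x, Fin y => lt x y
  | Fin _, PInf => true
  | Fin _, NInf => false
  | PInf, _ => false
  end.

Definition independent (lt0 lt1 : rel G) : Prop :=
  forall a0 b0 a1 b1 : ext, ltext lt0 a0 b0 -> ltext lt1 a1 b1 ->
    exists z : G, [/\ ltext lt0 a0 (Fin z), ltext lt0 (Fin z) b0,
                      ltext lt1 a1 (Fin z) & ltext lt1 (Fin z) b1].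

Definition dense (lt0 : rel G) (v : G -> option G) : Prop :=
  forall a b : G, lt0 a b ->
    exists c : G, ltinf lt0 (Some a) (v c) && ltinf lt0 (v c) (Some b).

Definition indep_dense_hamel (lt0 lt1 : rel G) (v : G -> option G) : Prop :=
  [/\ hamel_space lt0 lt1 v, independent lt0 lt1 & dense lt0 v].

End Hamel.

Inductive term (C : Type) :=
  | TVar of nat
  | TZero
  | TInf
  | TAdd of term C & term C
  | TScal of C & term C
  | TVal of term C.

Inductive formula (C : Type) :=
  | FEq of term C & term C
  | FLt0 of term C & term C
  | FLt1 of term C & term C
  | FNot of formula C
  | FAnd of formula C & formula C
  | FEx of nat & formula C.

Section Semantics.
Variable C : realFieldType.
Variable G : lmodType C.
Variables (lt0 lt1 : rel G) (v : G -> option G).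

Definition env := nat -> option G.

Fixpoint teval (e : env) (t : term C) : option G :=
  match t with
  | TVar i => e i
  | TZero => Some 0
  | TInf => None
  | TAdd t u =>
      match teval e t, teval e u with
      | Some x, Some y => Some (x + y)
      | _, _ => None
      end
  | TScal c t =>
      match teval e t with Some x => Some (c *: x) | None => None end
  | TVal t => vinf v (teval e t)
  end.

Definition upd (e : env) (i : nat) (d : option G) : env :=
  fun m => if m == i then d else e m.

Fixpoint sat (e : env) (phi : formula C) : Prop :=
  match phi with
  | FEq t u => teval e t = teval e u
  | FLt0 t u => ltinf lt0 (teval e t) (teval e u)
  | FLt1 t u => ltinf lt1 (teval e t) (teval e u)
  | FNot p => ~ sat e p
  | FAnd p q => sat e p /\ sat e q
  | FEx i p => exists d : option G, sat (upd e i d) p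
  end.

(* assignment: variables 0..n-1 are the object variables x, variables
   n, n+1, ... are the parameter variables y, read from p *)
Definition combine (n : nat) (b p : env) : env :=
  fun m => if (m < n)%N then b m else p (m - n)%N.

(* An ict-pattern in x = (x_0,...,x_{n-1}) whose rows are the i with
   rows i, given by formulas phi i (x; y) and parameters a i j, which is
   consistent with the elementary diagram of the structure, i.e. for
   every path eta, the type
     { phi_i(x, a_{i,eta i}) } u { ~ phi_i(x, a_{i,j}) : j <> eta i }
   (i ranging over rows) is finitely satisfiable in the structure. *)
Definition ict_pattern (n : nat) (rows : pred nat)
    (phi : nat -> formula C) (a : nat -> nat -> env) : Prop :=
  forall (eta : nat -> nat) (N : nat), exists b : env,
    forall i, (i < N)%N -> rows i ->
      sat (combine n b (a i (eta i))) (phi i) /\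
      (forall j, (j < N)%N -> j <> eta i -> ~ sat (combine n b (a i j)) (phi i)).

End Semantics.

Definition THam_has_ict (C : realFieldType) (n : nat) (rows : pred nat) : Prop :=
  exists (G : lmodType C) (lt0 lt1 : rel G) (v : G -> option G),
    indep_dense_hamel lt0 lt1 v /\
    exists (phi : nat -> formula C) (a : nat -> nat -> env G),
      ict_pattern lt0 lt1 v n rows phi a.

Definition THam_strongly_dependent (C : realFieldType) : Prop :=
  forall n, ~ THam_has_ict C n (fun _ => true).

Definition THam_dp_minimal (C : realFieldType) : Prop :=
  ~ THam_has_ict C 1 (fun i => (i < 2)%N).

Definition THam_finite_dp_rank (C : realFieldType) : Prop :=
  exists k, ~ THam_has_ict C 1 (fun i => (i < k)%N).

From HB Require Import structures.
From mathcomp Require Import all_boot all_order all_algebra.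
From mathcomp Require Import finmap monalg.
From mathcomp Require Import lra.
Set Implicit Arguments. Unset Strict Implicit. Unset Printing Implicit Defensive.
Import Order.TTheory GRing.Theory Num.Theory.
Import Order.DefaultProdLexiOrder Order.DefaultSeqLexiOrder.
Local Open Scope ring_scope.

(* The model is the free C-vector space K on the C-labelled finite trees T.
   The order <_1 is lexicographic along an order prec on T, and v x is the
   prec-first basis vector in the support of x, so x - v x peels off the leading
   monomial of x.  The order <_0 is lexicographic along an order of T comparing
   heights first, pulled back along the injective linear map
   phi : e_j |-> e_j + decode j, where every vector is decode j for trees j of
   arbitrary height; hence basis vectors are <_0-dense, which yields density of v
   and, using differences of basis vectors far along prec, independence.  Taking
   prec to be <_0 restricted to basis vectors makes v a Hamel valuation.
   For leaves g i j := -i - 1/(j+2), which are prec-increasing in i, the element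
   sum_(k < N) e_(g k (eta k)) has e_(g i (eta i)) as leading monomial after i
   peelings, so the formulas "v (x peeled i times) = y" with parameters e_(g i j)
   form an ict-pattern of infinite depth in one variable. *)

Definition strict_total (T : eqType) (r : rel T) : Prop :=
  [/\ irreflexive r, transitive r & forall x y, x != y -> r x y || r y x].

Lemma strict_total_lt (d : Order.disp_t) (T : orderType d) :
  strict_total (<%O : rel T).
Proof.
split; [exact: ltxx | by move=> y x z; apply: lt_trans | exact: lt_total].
Qed.

Lemma strict_total_comp (T U : eqType) (r : rel U) (f : T -> U) :
  injective f -> strict_total r -> strict_total (fun x y => r (f x) (f y)).
Proof.
move=> f_inj [irr tr tot]; split=> [x|y x z|x y]; [exact: irr | exact: tr |].
by rewrite -(inj_eq f_inj); apply: tot.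
Qed.

Section OrderedVspace.
Variables (C : realFieldType) (G : lmodType C) (lt : rel G).
Hypothesis ov : ordered_vspace lt.

Lemma ordered_vspace_strict_total : strict_total lt.
Proof.
case: ov => irr tr tot _ _; split=> [x|y x z|x y neq]; [exact/negbTE/irr | exact: tr |].
case/or3P: (tot x y) => [->//|/eqP xy|->]; last exact: orbT.
by rewrite xy eqxx in neq.
Qed.

Let lt_trans : transitive lt. Proof. by case: ordered_vspace_strict_total. Qed.

Lemma ltD2r x y z : lt (x + z) (y + z) = lt x y.
Proof.
case: ov => _ _ _ ltD _; apply/idP/idP => [|]; last exact: ltD.
by move/(ltD _ _ (- z)); rewrite !addrK.
Qed.

Lemma ltD2l x y z : lt (z + x) (z + y) = lt x y.
Proof. by rewrite ![z + _]addrC ltD2r. Qed.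

Lemma ltBlDl x y z : lt (x - y) z = lt x (y + z).
Proof. by rewrite -(ltD2l _ _ y) addrCA subrr addr0. Qed.

Lemma ltBrDl x y z : lt x (y - z) = lt (z + x) y.
Proof. by rewrite -(ltD2l _ _ z) addrCA subrr addr0. Qed.

Lemma lt_addr_pos e x : lt 0 e -> lt x (x + e).
Proof. by rewrite -(ltD2l 0 e x) addr0. Qed.

Lemma lt_subr_pos e x : lt 0 e -> lt (x - e) x.
Proof. by rewrite -(ltD2r 0 e (x - e)) add0r [e + _]addrC subrK. Qed.

Lemma lt_upper_bound e x y : lt 0 e -> exists z, lt x z /\ lt y z.
Proof.
move=> e_gt0; case: ov => _ _ tot _ _.
case/or3P: (tot x y) => [xy|/eqP<-|yx].
- by exists (y + e); split; [apply: lt_trans xy _|]; apply: lt_addr_pos.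
- by exists (x + e); split; apply: lt_addr_pos.
- by exists (x + e); split; [|apply: lt_trans yx _]; apply: lt_addr_pos.
Qed.

Lemma ext_interval_inner e (a b : ext G) : lt 0 e -> ltext lt a b ->
  exists l u, lt l u /\
    forall w, lt l w -> lt w u -> ltext lt a (Fin w) && ltext lt (Fin w) b.
Proof.
move=> e_gt0; case: a => [|a|]; case: b => [|b|] //= ab.
- by exists (b - e), b; split=> [|w _ //]; apply: lt_subr_pos.
- by exists 0, e.
- by exists a, b; split=> // w -> ->.
- by exists a, (a + e); split=> [|w -> //]; apply: lt_addr_pos.
Qed.

Lemma leinf_trans a b c : leinf lt a b -> leinf lt b c -> leinf lt a c.
Proof.
rewrite /leinf => /orP[ab|/eqP->] // /orP[bc|/eqP<-]; last by rewrite ab.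
by case: a b c ab bc => [a|] [b|] [c|] //= ab bc; rewrite (lt_trans ab bc).
Qed.

Lemma mininf_lel a b : leinf lt (mininf lt a b) a.
Proof.
have [_ _ tot] := ordered_vspace_strict_total.
rewrite /mininf /leinf; case: ifP => [_|ab]; first by rewrite eqxx orbT.
case: a b ab => [a|] [b|] //= ab; rewrite ?orbT //.
have [->|/tot] := eqVneq b a; first by rewrite eqxx orbT.
by rewrite ab orbF => ->.
Qed.

Lemma mininf_ler a b : leinf lt (mininf lt a b) b.
Proof. by rewrite /mininf /leinf; case: ifP => [ab|_]; rewrite ?ab ?eqxx ?orbT. Qed.

End OrderedVspace.

Lemma ordered_vspace_comp (C : realFieldType) (G H : lmodType C) (lt : rel H)
    (f : G -> H) :
  {morph f : x y / x + y} -> (forall c, {morph f : x / c *: x}) -> injective f ->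
  ordered_vspace lt -> ordered_vspace (fun x y => lt (f x) (f y)).
Proof.
move=> fD fZ f_inj ov; have [irr tr tot] := ordered_vspace_strict_total ov.
case: ov => _ _ tot3 ltD ltZ; split=> [x|x y z|x y|x y z|c x y].
- by rewrite irr.
- exact: tr.
- by rewrite -(inj_eq f_inj); apply: tot3.
- by rewrite !fD; apply: ltD.
- by rewrite !fZ; apply: ltZ.
Qed.

Section LexOrder.
Context {C : realFieldType} {T : choiceType}.
Variables (r : rel T) (t0 : T).
Hypothesis r_strict : strict_total r.
Local Notation K := {malg C[T]}.

Let r_irr : irreflexive r. Proof. by case: r_strict. Qed.
Let r_trans x y z : r x y -> r y z -> r x z.
Proof. by case: r_strict => _ tr _; apply: tr. Qed.
Let r_total x y : x != y -> r x y || r y x. Proof. by case: r_strict => _ _; apply. Qed.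

Let r_le x y := (x == y) || r x y.

(* [t0] is a junk value, returned for [z = 0] *)
Definition lead (z : K) : T := head t0 (sort r_le (msupp z)).

Lemma lead_first z t : t \in msupp z -> r_le (lead z) t.
Proof.
have le_total : total r_le.
  by move=> x y; rewrite /r_le /=; have [//|/r_total] := eqVneq x y.
have le_trans : transitive r_le.
  rewrite /r_le /= => y x u /orP[/eqP->//|xy] /orP[/eqP<-|yu]; first by rewrite xy orbT.
  by rewrite (r_trans xy yu) orbT.
rewrite -(mem_sort r_le) /lead.
have := sort_sorted le_total (msupp z).
case: (sort _ _) => [//|x s] /= /(order_path_min le_trans) /allP le_x_s.
by rewrite inE => /orP[/eqP->|/le_x_s]; rewrite /r_le ?eqxx.
Qed.

Lemma lead_supp z : z != 0 -> lead z \in msupp z.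
Proof.
case: (fset_0Vmem (msupp z)) => [z0|[t zt]].
  by case/eqP; apply/malgP => k; rewrite mcoeff0 mcoeff_outdom // z0.
rewrite -(mem_sort r_le) /lead.
have : t \in sort r_le (msupp z) by rewrite mem_sort.
by case: (sort _ _) => //= x s _; rewrite mem_head.
Qed.

Lemma coef_before_lead z t : r t (lead z) -> z@_t = 0.
Proof.
move=> t_lead; apply: mcoeff_outdom; apply/negP => /lead_first /orP[/eqP e|lead_t].
  by rewrite e r_irr in t_lead.
by have := r_trans lead_t t_lead; rewrite r_irr.
Qed.

Lemma lead_charac z g :
  z@_g != 0 -> (forall t, r t g -> z@_t = 0) -> lead z = g.
Proof.
move=> zg before_g.
have z_neq0 : z != 0 by apply: contraNneq zg => ->; rewrite mcoeff0.
rewrite mcoeff_neq0 in zg; case/orP: (lead_first zg) => [/eqP//|/before_g/eqP].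
by rewrite mcoeff_eq0 lead_supp.
Qed.

Lemma leadZ c z : c != 0 -> lead (c *: z) = lead z.
Proof. by move=> c_neq0; rewrite /lead msuppZ (negbTE c_neq0). Qed.

Lemma leadN z : lead (- z) = lead z.
Proof. by rewrite /lead msuppN. Qed.

Lemma mcoeffU1 g t : (<< g >> : K)@_t = (g == t)%:R.
Proof. by rewrite mcoeffU. Qed.

Lemma msuppU1 g : msupp (<< g >> : K) = [fset g]%fset.
Proof. by rewrite msuppU oner_eq0. Qed.

Lemma monalgU1_inj (g h : T) : << g >> = << h >> :> K -> g = h.
Proof.
move=> /(congr1 (mcoeff h)); rewrite !mcoeffU1 eqxx.
by case: eqVneq => // _ /eqP; rewrite eq_sym oner_eq0.
Qed.

Definition pos (z : K) := (z != 0) && (0 < z@_(lead z)).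

Lemma pos_neq0 z : pos z -> z != 0.
Proof. by case/andP. Qed.

Definition pos_at (g : T) (z : K) := 0 < z@_g /\ forall t, r t g -> z@_t = 0.

Lemma pos_at_lead g z : pos_at g z -> lead z = g.
Proof. by case=> zg before_g; apply: lead_charac; rewrite // gt_eqF. Qed.

Lemma posP z : reflect (exists g, pos_at g z) (pos z).
Proof.
apply: (iffP andP) => [[_ z_lead]|[g zg]].
  by exists (lead z); split=> // t; apply: coef_before_lead.
rewrite (pos_at_lead zg); case: zg => zg _; split=> //.
by apply: contraTneq zg => ->; rewrite mcoeff0 ltxx.
Qed.

Lemma pos_atU g : pos_at g << g >>.
Proof.
split=> [|t tg]; first by rewrite mcoeffUU ltr01.
by rewrite mcoeffU1; case: eqVneq tg => // ->; rewrite r_irr.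
Qed.

Lemma pos_atZ c g z : 0 < c -> pos_at g z -> pos_at g (c *: z).
Proof.
move=> c_gt0 [zg before_g]; split=> [|t tg]; first by rewrite mcoeffZ mulr_gt0.
by rewrite mcoeffZ before_g ?mulr0.
Qed.

Lemma pos_at_subU c g z : c < z@_g -> pos_at g z -> pos_at g (z - c *: << g >>).
Proof.
move=> cz [_ before_g]; split=> [|t tg].
  by rewrite mcoeffB mcoeffZ mcoeffUU mulr1 subr_gt0.
rewrite mcoeffB mcoeffZ mcoeffU1 before_g //.
by case: eqVneq tg => [->|_]; rewrite ?r_irr // mulr0 subr0.
Qed.

Definition supp_after (g : T) (w : K) := forall t, t \in msupp w -> r g t.

Lemma supp_afterN g w : supp_after g w -> supp_after g (- w).
Proof. by move=> gw t; rewrite msuppN; apply: gw. Qed.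

Lemma supp_afterD g w w' :
  supp_after g w -> supp_after g w' -> supp_after g (w + w').
Proof.
move=> gw gw' t /(fsubsetP (msuppD_le w w')).
by rewrite in_fsetU => /orP[/gw|/gw'].
Qed.

Lemma supp_afterU g h : r g h -> supp_after g << h >>.
Proof. by move=> gh t; rewrite msuppU1 in_fset1 => /eqP->. Qed.

Lemma pos_at_add_after g z w : pos_at g z -> supp_after g w -> pos_at g (z + w).
Proof.
have w_before t : supp_after g w -> (t == g) || r t g -> w@_t = 0.
  move=> gw tg; apply: mcoeff_outdom; apply/negP => /gw gt.
  case/orP: tg => [/eqP tg|tg]; first by rewrite tg r_irr in gt.
  by have := r_trans gt tg; rewrite r_irr.
move=> [zg before_g] gw; split=> [|t tg]; rewrite mcoeffD.
  by rewrite (w_before g) ?eqxx // addr0.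
by rewrite before_g // (w_before t) ?tg ?orbT // addr0.
Qed.

Lemma pos_add a b : pos a -> pos b -> pos (a + b).
Proof.
move=> /posP[ga [a_ga before_ga]] /posP[gb [b_gb before_gb]]; apply/posP.
have [eq_g|/r_total/orP[ab|ba]] := eqVneq ga gb.
- subst gb; exists ga; split=> [|t tg]; rewrite mcoeffD; first exact: addr_gt0.
  by rewrite before_ga ?before_gb ?addr0.
- exists ga; split=> [|t tg]; rewrite mcoeffD; first by rewrite (before_gb _ ab) addr0.
  by rewrite before_ga // before_gb ?addr0 //; apply: r_trans tg ab.
- exists gb; split=> [|t tg]; rewrite mcoeffD; first by rewrite (before_ga _ ba) add0r.
  by rewrite before_gb // before_ga ?addr0 //; apply: r_trans tg ba.
Qed.

Lemma pos_total z : z != 0 -> pos z || pos (- z).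
Proof.
move=> z_neq0; have zl : z@_(lead z) != 0 by rewrite mcoeff_neq0 lead_supp.
rewrite /pos oppr_eq0 z_neq0 /= leadN mcoeffN oppr_gt0.
by case: ltgtP zl.
Qed.

Definition lexlt (x y : K) := pos (y - x).

Lemma lexlt_ordered : ordered_vspace lexlt.
Proof.
split=> [x|x y z xy yz|x y|x y z|c x y c_gt0].
- by rewrite /lexlt subrr /pos eqxx.
- by have := pos_add yz xy; rewrite /lexlt addrA subrK.
- have [->|xy] := eqVneq x y; first by rewrite /= orbT.
  have := pos_total (_ : y - x != 0); rewrite subr_eq0 eq_sym => /(_ xy).
  by rewrite /lexlt opprB => /orP[->|->]; rewrite ?orbT.
- by rewrite /lexlt opprD addrACA subrr addr0.
- rewrite /lexlt -scalerBr => /posP[g /(pos_atZ c_gt0) zg].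
  by apply/posP; exists g.
Qed.

Lemma lexltU g h : r h g -> lexlt << g >> << h >>.
Proof.
move=> hg; apply/posP; exists h.
exact/(pos_at_add_after (pos_atU h))/supp_afterN/supp_afterU.
Qed.

Lemma lead_antitone x y :
  pos x -> pos (y - x) -> (lead y == lead x) || r (lead y) (lead x).
Proof.
move=> /andP[_ x_lead] /andP[_]; case: eqVneq => //= neq.
case/orP: (r_total neq) => // lx_ly.
have yx_lead : lead (y - x) = lead x.
  apply: lead_charac => [|t t_lx]; rewrite mcoeffB.
    by rewrite (coef_before_lead lx_ly) sub0r oppr_eq0 gt_eqF.
  by rewrite (coef_before_lead t_lx) subr0 coef_before_lead // (r_trans t_lx).
by rewrite yx_lead mcoeffB (coef_before_lead lx_ly) sub0r oppr_gt0 ltNge ltW.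
Qed.

Lemma lexlt_ext_interval (a b : ext K) : ltext lexlt a b ->
  exists m g, forall w, supp_after g w ->
    ltext lexlt a (Fin (m + w)) && ltext lexlt (Fin (m + w)) b.
Proof.
have pos_t0 w : supp_after t0 w -> pos (<< t0 >> + w).
  by move=> t0w; apply/posP; exists t0; apply: pos_at_add_after (pos_atU t0) _.
case: a => [|a|]; case: b => [|b|] //= ab.
- exists (b - << t0 >>), t0 => w /supp_afterN /pos_t0.
  by rewrite /lexlt opprD opprB addrA [b + _]addrC subrK.
- by exists 0, t0.
- case/posP: ab => g ab_g; exists (a + 2^-1 *: (b - a)), g => w gw.
  have half_gt0 : 0 < 2^-1 :> C by rewrite invr_gt0 ltr0n.
  have /pos_atZ/(_ ab_g) half_g := half_gt0.
  apply/andP; split; apply/posP; exists g.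
    by rewrite addrAC [a + _]addrC addrK; apply: pos_at_add_after.
  rewrite opprD addrA opprD addrA -{1}[b - a]scale1r -scalerBl.
  have -> : 1 - 2^-1 = 2^-1 :> C by lra.
  exact/(pos_at_add_after half_g)/supp_afterN.
- exists (a + << t0 >>), t0 => w /pos_t0.
  by rewrite /lexlt andbT addrAC [a + _]addrC addrK.
Qed.

End LexOrder.

Section HamelModel.
Variable C : realFieldType.
Local Notation T := (GenTree.tree C).
Local Notation K := {malg C[T]}.

Fixpoint height (t : T) : nat :=
  if t is GenTree.Node _ l then (foldr maxn 0 (map height l)).+1 else 0.

Definition code_letter (u : nat + C) : nat * C :=
  match u with inl n => (n.+1, 0) | inr c => (0%N, c) end.

(* heights first, so that [decode j] is supported strictly before [j] *)
Definition tree_key (t : T) : nat * seq (nat * C) :=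
  (height t, map code_letter (GenTree.encode t)).

Definition ltT (x y : T) := (tree_key x < tree_key y)%O.

Lemma tree_key_inj : injective tree_key.
Proof.
have code_letter_inj : injective code_letter by case=> [m|a] [n|b] //= [] ->.
move=> x y [_ /(inj_map code_letter_inj) xy].
by have := GenTree.codeK C x; rewrite xy GenTree.codeK => -[].
Qed.

Lemma strict_total_ltT : strict_total ltT.
Proof. exact: strict_total_comp tree_key_inj (strict_total_lt _). Qed.

Lemma ltT_height x y : (height x < height y)%N -> ltT x y.
Proof.
move=> xy; rewrite /ltT /tree_key ltEprodlexi /=.
have -> : (height x <= height y)%O by exact: ltnW.
by have -> : (height y <= height x)%O = false by apply/negbTE; rewrite -ltnNge.
Qed.

Lemma ltT_leaf (a b : C) : ltT (GenTree.Leaf a) (GenTree.Leaf b) = (a < b).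
Proof.
rewrite /ltT /tree_key /= ltEprodlexi /= ltxi_cons ltxx implybF -ltNge.
by rewrite andb_idl ?ltEprodlexi //; apply: ltW.
Qed.

Definition entry (u : T) : K :=
  if u is GenTree.Node _ [:: t; GenTree.Leaf c] then << c *g t >> else 0.

Definition decode (j : T) : K :=
  if j is GenTree.Node _ l then \sum_(u <- l) entry u else 0.

Lemma decode_supp j t : t \in msupp (decode j) -> (height t < height j)%N.
Proof.
case: j => [x|n l] /=; first by rewrite msupp0.
rewrite ltnS.
elim: l => [|u l IH]; first by rewrite big_nil msupp0.
rewrite big_cons => /(fsubsetP (msuppD_le _ _)); rewrite in_fsetU /=.
case/orP=> [|/IH]; last by move/leq_trans; apply; apply: leq_maxr.
case: u => [//|m [//|t' [//|[c|//] [|//]]]] /=; rewrite ?msupp0 //.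
move/(fsubsetP msuppU_le); rewrite in_fset1 => /eqP ->.
by apply: leq_trans (leq_maxl _ _); apply/leqW/leq_maxl.
Qed.

Lemma exists_code (s : K) (g : T) : exists j, decode j = s /\ ltT g j.
Proof.
(* the child [Node 0 [:: g]] adds nothing to [decode j]; it lifts [j] above [g] *)
pose j := GenTree.Node 0 (GenTree.Node 0 [:: g] ::
  [seq GenTree.Node 0 [:: t; GenTree.Leaf s@_t] | t <- msupp s]).
exists j; split; first by rewrite /= big_cons add0r big_map [RHS]monalgE.
by apply: ltT_height; rewrite /= ltnS (leq_trans _ (leq_maxl _ _)) // maxn0.
Qed.

Definition decode_part (x : K) : K := \sum_(j <- msupp x) x@_j *: decode j.

Fact phi_key : unit. Proof. exact: tt. Qed.
Definition phi := locked_with phi_key (fun x : K => x + decode_part x).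

Lemma phiE x : phi x = x + decode_part x.
Proof. by rewrite /phi unlock. Qed.

Lemma decode_partE (d : {fset T}) x : (msupp x `<=` d)%fset ->
  decode_part x = \sum_(j <- d) x@_j *: decode j.
Proof.
by move=> sub; apply: big_fset_incl => // j _ jx; rewrite mcoeff_outdom // scale0r.
Qed.

Lemma phiD : {morph phi : x y / x + y}.
Proof.
move=> x y; rewrite !phiE addrACA; congr (_ + _).
rewrite !(@decode_partE (msupp x `|` msupp y)%fset) ?fsubsetUl ?fsubsetUr //.
  by rewrite -big_split; apply: eq_bigr => j _; rewrite mcoeffD scalerDl.
exact: msuppD_le.
Qed.

Lemma phiZ c : {morph phi : x / c *: x}.
Proof.
move=> x; rewrite !phiE scalerDr; congr (_ + _).
rewrite (@decode_partE (msupp x)) ?msuppZ_le // scaler_sumr.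
by apply: eq_bigr => j _; rewrite mcoeffZ scalerA.
Qed.

Lemma phiU j : phi << j >> = << j >> + decode j.
Proof.
rewrite phiE (@decode_partE [fset j]%fset) ?msuppU_le //.
by rewrite big_seq_fset1 mcoeffUU scale1r.
Qed.

Definition leaf0 : T := GenTree.Leaf 0.

Lemma phi_neq0 x : x != 0 -> phi x != 0.
Proof.
have gtT_strict : strict_total (fun a b => ltT b a).
  have [irr tr tot] := strict_total_ltT; split=> // [y a b ay yb|a b ab].
    exact: tr yb ay.
  by rewrite orbC tot.
(* [decode_part x] vanishes at the [ltT]-last point [m] of the support of [x] *)
move=> x_neq0; set m := lead (fun a b => ltT b a) leaf0 x.
have : x@_m != 0 by rewrite mcoeff_neq0 lead_supp.
suff <- : (phi x)@_m = x@_m by apply: contra_neq => ->; rewrite mcoeff0.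
rewrite phiE mcoeffD /decode_part raddf_sum big1_seq ?addr0 //= => j xj.
rewrite mcoeffZ [(decode j)@_m]mcoeff_outdom ?mulr0 //.
apply/negP => /decode_supp/ltT_height mj.
have [irr tr _] := strict_total_ltT.
case/orP: (lead_first leaf0 gtT_strict xj) => [/eqP jm|jm].
  by rewrite -jm irr in mj.
by have := tr _ _ _ mj jm; rewrite irr.
Qed.

Lemma phi_inj : injective phi.
Proof.
move=> x y; apply: contra_eq.
rewrite -subr_eq0 -(subr_eq0 (phi x)) => /phi_neq0.
by rewrite phiD -scaleN1r phiZ scaleN1r.
Qed.

Definition lt0 (x y : K) := lexlt ltT leaf0 (phi x) (phi y).

Lemma lt0_ordered : ordered_vspace lt0.
Proof.
exact: ordered_vspace_comp phiD phiZ phi_inj (lexlt_ordered leaf0 strict_total_ltT).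
Qed.

Definition prec (g h : T) := lt0 << g >> << h >>.

Lemma strict_total_prec : strict_total prec.
Proof.
exact: strict_total_comp monalgU1_inj (ordered_vspace_strict_total lt0_ordered).
Qed.

Definition lt1 : rel K := lexlt prec leaf0.

Definition v (x : K) : option K :=
  if x == 0 then None else Some << lead prec leaf0 x >>.

Local Notation lead1 := (lead prec leaf0).

Lemma v_pos_at g x : pos_at prec g x -> v x = Some << g >>.
Proof.
move=> xg; rewrite /v (pos_at_lead leaf0 strict_total_prec xg) ifN //.
by case: xg => xg _; apply: contraTneq xg => ->; rewrite mcoeff0 ltxx.
Qed.

Lemma vU g : v << g >> = Some << g >>.
Proof. exact/v_pos_at/pos_atU/strict_total_prec. Qed.

Lemma v_le_supp x t : t \in msupp x -> leinf lt0 (v x) (Some << t >>).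
Proof.
move=> xt; have x_neq0 : x != 0 by apply: contraTneq xt => ->; rewrite msupp0.
rewrite /v (negbTE x_neq0) /leinf /= orbC (inj_eq Some_inj) (inj_eq monalgU1_inj).
exact: lead_first leaf0 strict_total_prec _ _ xt.
Qed.

Lemma hamel_v : hamel_valuation lt0 lt1 v.
Proof.
split; [|split; [|split; [|split; [|split]]]].
- by move=> x; rewrite /v; case: eqP => [->|]; split.
- move=> x y; have [xy0|xy] := eqVneq (x + y) 0.
    by rewrite /v xy0 eqxx /leinf; case: mininf => [?|] /=; rewrite ?eqxx ?orbT.
  have -> : v (x + y) = Some << lead1 (x + y) >> by rewrite /v (negbTE xy).
  have := lead_supp prec leaf0 xy.
  move=> /(fsubsetP (msuppD_le x y)); rewrite in_fsetU => /orP[|] /v_le_supp le_l.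
    exact: (leinf_trans lt0_ordered (mininf_lel lt0_ordered _ _) le_l).
  exact: (leinf_trans lt0_ordered (mininf_ler lt0 _ _) le_l).
- by move=> c x c_neq0; rewrite /v scaler_eq0 (negbTE c_neq0) leadZ.
- move=> x y; rewrite /lt1 /lexlt subr0 => x_pos yx_pos.
  have y_pos : pos prec leaf0 y.
    by have := pos_add strict_total_prec yx_pos x_pos; rewrite subrK.
  rewrite /v (negbTE (pos_neq0 x_pos)) (negbTE (pos_neq0 y_pos)) /leinf /=.
  rewrite orbC (inj_eq Some_inj) (inj_eq monalgU1_inj).
  exact: (lead_antitone strict_total_prec x_pos yx_pos).
- by move=> x; rewrite /v; case: eqP => //= _; apply: vU.
- move=> x; rewrite /v; case: eqP => //= _; rewrite /lt1 /lexlt subr0.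
  apply/(posP leaf0 strict_total_prec); exists (lead1 x).
  exact: pos_atU strict_total_prec _.
Qed.

Lemma lt0_trans x y z : lt0 x y -> lt0 y z -> lt0 x z.
Proof. by case: (ordered_vspace_strict_total lt0_ordered) => _ tr _; apply: tr. Qed.

Lemma lt0_dense_monomials a b :
  lt0 a b -> exists j, lt0 a << j >> && lt0 << j >> b.
Proof.
rewrite /lt0 /lexlt => /(posP leaf0 strict_total_ltT)[g ab_g].
(* [phi << j >> = << j >> + phi a + d *: << g >>], and [j] comes after [g] *)
set z := phi b - phi a in ab_g; pose d := z@_g / 2.
have [d_gt0 d_lt] : 0 < d /\ d < z@_g by case: ab_g => zg _; rewrite /d; split; lra.
have [j [decode_j gj]] := exists_code (phi a + d *: << g >>) g.
exists j; rewrite phiU decode_j.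
apply/andP; split; apply/(posP leaf0 strict_total_ltT); exists g.
  rewrite addrCA [phi a + _]addrC addrK addrC.
  have dg := pos_atZ d_gt0 (pos_atU strict_total_ltT g).
  exact: (pos_at_add_after strict_total_ltT dg (supp_afterU gj)).
rewrite [<< j >> + _]addrC opprD addrA opprD addrA.
exact: (pos_at_add_after strict_total_ltT (pos_at_subU strict_total_ltT d_lt ab_g)
  (supp_afterN (supp_afterU gj))).
Qed.

Lemma v_dense : dense lt0 v.
Proof. by move=> a b /lt0_dense_monomials[j aj_jb]; exists << j >>; rewrite vU. Qed.

Lemma lt0_monomial_pos : lt0 0 << leaf0 >>.
Proof.
rewrite /lt0 /lexlt phiU phiE /decode_part msupp0 big_seq_fset0 /= !addr0 subr0.
by apply/(posP leaf0 strict_total_ltT); exists leaf0; apply: pos_atU strict_total_ltT _.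
Qed.

Lemma supp_after_dense g l u : lt0 l u ->
  exists w, [/\ supp_after prec g w, lt0 l w & lt0 w u].
Proof.
(* [w := << j2 >> - << j1 >>] with [j1], [j2] after [g] in [prec] *)
have e_pos := lt0_monomial_pos; move=> lu.
have [M [gM g_lM]] := lt_upper_bound lt0_ordered << g >> (<< g >> - l) e_pos.
have [j1 /andP[Mj1 _]] := lt0_dense_monomials (lt_addr_pos lt0_ordered M e_pos).
have gj1 : prec g j1 := lt0_trans gM Mj1.
have [j2 /andP[lj2 j2u]] :
    exists j2, lt0 (<< j1 >> + l) << j2 >> && lt0 << j2 >> (<< j1 >> + u).
  by apply: lt0_dense_monomials; rewrite (ltD2l lt0_ordered).
have gj2 : prec g j2.
  apply: lt0_trans lj2; rewrite addrC -(ltBlDl lt0_ordered).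
  exact: lt0_trans g_lM Mj1.
exists (<< j2 >> - << j1 >>); split.
- exact: (supp_afterD (supp_afterU gj2) (supp_afterN (supp_afterU gj1))).
- by rewrite (ltBrDl lt0_ordered).
- by rewrite (ltBlDl lt0_ordered).
Qed.

Lemma lt0_lt1_independent : independent lt0 lt1.
Proof.
move=> a0 b0 a1 b1 ab0 ab1.
have [m [g m_in]] := lexlt_ext_interval strict_total_prec ab1.
have [l [u [lu lu_in]]] := ext_interval_inner lt0_ordered lt0_monomial_pos ab0.
have [w [gw lw wu]] :
    exists w, [/\ supp_after prec g w, lt0 (l - m) w & lt0 w (u - m)].
  by apply: supp_after_dense; rewrite (ltD2r lt0_ordered).
have lmw : lt0 l (m + w) by rewrite -(ltBlDl lt0_ordered).
have mwu : lt0 (m + w) u by rewrite -(ltBrDl lt0_ordered).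
exists (m + w); case/andP: (m_in w gw) => -> ->.
by case/andP: (lu_in _ lmw mwu) => -> ->.
Qed.

Lemma hamel_model : indep_dense_hamel lt0 lt1 v.
Proof.
split=> //; last exact: v_dense; last exact: lt0_lt1_independent.
split; last exact: hamel_v.
by split; [exact: lt0_ordered | exact: lexlt_ordered leaf0 strict_total_prec].
Qed.

Definition pattern_leaf (i j : nat) : T := GenTree.Leaf (- i%:R - (j.+2)%:R^-1).

Lemma prec_pattern_leaf i k x y :
  (i < k)%N -> prec (pattern_leaf i x) (pattern_leaf k y).
Proof.
move=> ik; rewrite /prec /lt0 !phiU /= !addr0.
apply: (lexltU leaf0 strict_total_ltT); rewrite ltT_leaf.
have : i%:R + 1 <= k%:R :> C by rewrite natr1 ler_nat.
have : 0 < y.+2%:R^-1 :> C by rewrite invr_gt0 ltr0n.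
have : x.+2%:R^-1 < 1 :> C by rewrite invf_lt1 ?ltr0n ?ltr1n.
by move: (i%:R : C) (k%:R : C) (x.+2%:R^-1 : C) (y.+2%:R^-1 : C) => I K a b; lra.
Qed.

Lemma pattern_leaf_inj i x y : pattern_leaf i x = pattern_leaf i y -> x = y.
Proof.
move=> [] /eqP; rewrite (inj_eq (addrI _)) (inj_eq oppr_inj).
by rewrite (inj_eq (@invr_inj _)) eqr_nat => /eqP[].
Qed.

Fixpoint strip_term (i : nat) : term C :=
  if i is i'.+1 then TAdd (strip_term i') (TScal (-1) (TVal (strip_term i')))
  else TVar C 0.

Definition lead_formula (i : nat) : formula C :=
  FEq (TVal (strip_term i)) (TVar C 1).

Definition pattern_param (i j : nat) : env K := fun=> Some << pattern_leaf i j >>.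

Section Realization.
Variables (eta : nat -> nat) (N : nat).

Definition pattern_tail (i : nat) : K :=
  \sum_(i <= k < N) << pattern_leaf k (eta k) >>.

Lemma pattern_tailS i :
  (i < N)%N -> pattern_tail i = << pattern_leaf i (eta i) >> + pattern_tail i.+1.
Proof. exact: big_ltn. Qed.

Lemma v_pattern_tail i :
  (i < N)%N -> v (pattern_tail i) = Some << pattern_leaf i (eta i) >>.
Proof.
move=> iN; apply: v_pos_at; rewrite pattern_tailS //.
apply: (pos_at_add_after strict_total_prec (pos_atU strict_total_prec _)).
rewrite /pattern_tail big_nat.
apply: (big_ind (supp_after prec _)) => [t|w w'|k /andP[ik _]].
- by rewrite msupp0.
- exact: supp_afterD.
- exact/supp_afterU/prec_pattern_leaf.
Qed.

Lemma teval_strip_term p i : (i <= N)%N ->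
  teval v (combine 1 (fun=> Some (pattern_tail 0)) p) (strip_term i) =
  Some (pattern_tail i).
Proof.
elim: i => [//|i IH] iN /=; rewrite IH ?(ltnW iN) //= v_pattern_tail //=.
by rewrite (pattern_tailS iN) scaleN1r addrAC subrr add0r.
Qed.

End Realization.

Lemma THam_ict_lead_formulas rows : THam_has_ict C 1 rows.
Proof.
exists (K : lmodType C), lt0, lt1, v; split; first exact: hamel_model.
exists lead_formula, pattern_param => eta N.
exists (fun=> Some (pattern_tail eta N 0)) => i iN _.
have v_strip p : vinf v (teval v (combine 1 (fun=> Some (pattern_tail eta N 0)) p)
    (strip_term i)) = Some << pattern_leaf i (eta i) >>.
  by rewrite teval_strip_term ?(ltnW iN) //= v_pattern_tail.
split=> [|j jN]; rewrite /= v_strip // /combine /pattern_param /= => neq.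
by move=> /Some_inj/monalgU1_inj/pattern_leaf_inj/esym.
Qed.

End HamelModel.

Theorem theorem7p1 (C : realFieldType) :
  ~ THam_strongly_dependent C /\ ~ THam_dp_minimal C /\ ~ THam_finite_dp_rank C.
Proof.
have ict := THam_ict_lead_formulas C.
split; first by move/(_ 1%N); apply.
by split; [apply | case=> k; apply].
Qed.
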